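(* Let $L_n$ and $PL_n$ be as in the context. Then $PL_n$ is a non-abelian free group of finite rank if and only if $n\ge 4$ (for $n=2,3$, $PL_n$ is trivial).
   Context: For $n\ge 2$, $L_n=\langle y_1,\dots,y_{n-1}\mid y_j^2=1\ (1\le j\le n-1),\ y_iy_{i+1}y_i=y_{i+1}y_iy_{i+1}\ (1\le i\le n-2)\rangle$ (no relations between $y_i,y_j$ with $|i-j|\ge 2$). Let $\pi:L_n\to S_n$ be the surjective homomorphism with $\pi(y_i)=(i\ i{+}1)$, the transposition, and $PL_n=\ker\pi$. *)

(* The group L_n is given by its presentation: elements are
   words in the generators modulo the congruence generated by the relators. *)
From mathcomp Require Import all_boot all_order all_fingroup.
Set Implicit Arguments. Unset Strict Implicit. Unset Printing Implicit Defensive.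

(* A letter j : nat (0-based) stands for the generator y_(j+1);
   it is a valid letter of L_n iff j + 1 <= n - 1, i.e. j.+1 < n. *)
Definition valid_word (n : nat) (w : seq nat) : bool := all (fun j => j.+1 < n) w.

Inductive Lequiv (n : nat) : seq nat -> seq nat -> Prop :=
| Lequiv_refl w : Lequiv n w w
| Lequiv_sym u v : Lequiv n u v -> Lequiv n v u
| Lequiv_trans u v w : Lequiv n u v -> Lequiv n v w -> Lequiv n u w
| Lequiv_sq u v j : j.+1 < n -> Lequiv n (u ++ [:: j; j] ++ v) (u ++ v)
| Lequiv_braid u v i : i.+2 < n ->
    Lequiv n (u ++ [:: i; i.+1; i] ++ v) (u ++ [:: i.+1; i; i.+1] ++ v).

Definition adj_transp (n j : nat) : 'S_n :=
  match (insub j : option 'I_n), (insub j.+1 : option 'I_n) with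
  | Some a, Some b => tperm a b
  | _, _ => 1%g
  end.

Definition pi_word (n : nat) (w : seq nat) : 'S_n :=
  foldr (fun j s => (adj_transp n j * s)%g) 1%g w.

Definition in_PL (n : nat) (w : seq nat) : Prop :=
  valid_word n w /\ pi_word n w = 1%g.

(* Words of the free group F_k on basis 'I_k : (i, true) = x_i, (i, false) = x_i^-1. *)
Fixpoint reduced (k : nat) (f : seq ('I_k * bool)) : bool :=
  match f with
  | x :: ((y :: _) as t) => ~~ ((x.1 == y.1) && (x.2 != y.2)) && reduced t
  | _ => true
  end.

(* Image of a free word under x_i |-> b i in L_n. Inverse of a word in the
   involutive generators y_j is its reversal. *)
Definition eval_free (k : nat) (b : 'I_k -> seq nat) (f : seq ('I_k * bool)) : seq nat :=
  flatten (map (fun x => if x.2 then b x.1 else rev (b x.1)) f).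

(* PL_n is free of finite rank: there is a finite family b_1..b_k in PL_n
   such that the induced homomorphism F_k -> PL_n is surjective and injective
   (no nonempty reduced word maps to the identity). *)
Definition PL_free_finite_rank (n : nat) : Prop :=
  exists (k : nat) (b : 'I_k -> seq nat),
    (forall i, in_PL n (b i)) /\
    (forall w, in_PL n w -> exists f, Lequiv n w (eval_free b f)) /\
    (forall f, reduced f -> Lequiv n (eval_free b f) [::] -> f = [::]).

Definition PL_nonabelian (n : nat) : Prop :=
  exists u v, in_PL n u /\ in_PL n v /\ ~ Lequiv n (u ++ v) (v ++ u).

Definition PL_trivial (n : nat) : Prop :=
  forall w, in_PL n w -> Lequiv n w [::].

(* L_n is the fundamental group of a
   path of groups: the vertex groups are the dihedral groups D_k generated by
   the letters k and k+1 (of order 6), glued along the edge groups generated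
   by the letters k+1 (of order 2).  The projection pi : L_n -> S_n is injective
   on every D_k, so PL_n = ker pi acts freely on the Bass-Serre tree and is
   therefore free, with one basis element for each edge of the finite
   quotient graph lying outside a spanning tree.
   Finally an explicit action of L_n on nat shows that PL_n is not abelian for
   n >= 4, while for n <= 3 the group L_n is a single vertex group (or Z/2),
   so PL_n is trivial. *)

From Stdlib Require Import ClassicalEpsilon.
From mathcomp Require Import all_boot all_order all_fingroup zify.
Set Implicit Arguments. Unset Strict Implicit. Unset Printing Implicit Defensive.

Section LequivBasics.
Variable n : nat.
Local Notation Lq := (Lequiv n).
Local Notation pi := (pi_word n).

Lemma Lequiv_ctx a b u v : Lq u v -> Lq (a ++ u ++ b) (a ++ v ++ b).
Proof.
elim=> {u v} [w|u v _ IH|u v w _ IH1 _ IH2|u v j hj|u v i hi].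
- exact: Lequiv_refl.
- exact: Lequiv_sym.
- exact: Lequiv_trans IH1 IH2.
- by have := Lequiv_sq (a ++ u) (v ++ b) hj; rewrite -!catA.
- by have := Lequiv_braid (a ++ u) (v ++ b) hi; rewrite -!catA.
Qed.

Lemma Lequiv_cat u u' v v' : Lq u u' -> Lq v v' -> Lq (u ++ v) (u' ++ v').
Proof.
move=> H1 H2; apply: Lequiv_trans (_ : Lq (u' ++ v) _).
  exact: (Lequiv_ctx [::] v H1).
by have H := Lequiv_ctx u' [::] H2; rewrite !cats0 in H.
Qed.

Lemma Lequiv_catl u v v' : Lq v v' -> Lq (u ++ v) (u ++ v').
Proof. by move=> H; apply: Lequiv_cat => //; apply: Lequiv_refl. Qed.

Lemma Lequiv_catr u u' v : Lq u u' -> Lq (u ++ v) (u' ++ v).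
Proof. by move=> H; apply: Lequiv_cat => //; apply: Lequiv_refl. Qed.

Lemma Lequiv_sq_head j v : j.+1 < n -> Lq [:: j, j & v] v.
Proof. by move=> hj; have := @Lequiv_sq n [::] v j hj. Qed.

Lemma Lequiv_braid_head i v : i.+2 < n ->
  Lq [:: i, i.+1, i & v] [:: i.+1, i, i.+1 & v].
Proof. by move=> hi; have := @Lequiv_braid n [::] v i hi. Qed.

(* Reversal is compatible with the relations (they are palindromic). *)
Lemma Lequiv_rev u v : Lq u v -> Lq (rev u) (rev v).
Proof.
elim=> {u v} [w|u v _ IH|u v w _ IH1 _ IH2|u v j hj|u v i hi].
- exact: Lequiv_refl.
- exact: Lequiv_sym.
- exact: Lequiv_trans IH1 IH2.
- by rewrite !rev_cat; have := @Lequiv_sq n (rev v) (rev u) j hj; rewrite -!catA.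
- by rewrite !rev_cat; have := @Lequiv_braid n (rev v) (rev u) i hi; rewrite -!catA.
Qed.

Lemma valid_rev w : valid_word n (rev w) = valid_word n w.
Proof. by rewrite /valid_word all_rev. Qed.

Lemma valid_cat u v : valid_word n (u ++ v) = valid_word n u && valid_word n v.
Proof. by rewrite /valid_word all_cat. Qed.

(* Since every generator is an involution, rev w is an inverse of w. *)
Lemma Lequiv_cat_rev w : valid_word n w -> Lq (w ++ rev w) [::].
Proof.
elim: w => [|j w IH] /=; first by move=> _; exact: Lequiv_refl.
case/andP=> hj hw; rewrite rev_cons -cats1.
have H := Lequiv_ctx [:: j] [:: j] (IH hw); rewrite /= -catA in H.
exact: Lequiv_trans H (Lequiv_sq_head [::] hj).
Qed.

Lemma Lequiv_rev_cat w : valid_word n w -> Lq (rev w ++ w) [::].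
Proof. by move=> hw; have := @Lequiv_cat_rev (rev w); rewrite revK valid_rev; apply. Qed.

Lemma adj_transpE j (hj : j.+1 < n) :
  adj_transp n j = tperm (Ordinal (ltnW hj)) (Ordinal hj).
Proof.
by rewrite /adj_transp (insubT (fun m => m < n) (ltnW hj)) (insubT (fun m => m < n) hj).
Qed.

Lemma adj_transpK j : (adj_transp n j * adj_transp n j = 1)%g.
Proof.
rewrite /adj_transp; case: (insub j) => [a|]; last by rewrite mulg1.
by case: (insub j.+1) => [b|]; rewrite ?tperm2 ?mulg1.
Qed.

Lemma adj_transp_braid i : i.+2 < n ->
  (adj_transp n i * adj_transp n i.+1 * adj_transp n i =
   adj_transp n i.+1 * adj_transp n i * adj_transp n i.+1)%g.
Proof.
move=> hi; have hb : i.+1 < n := ltnW hi.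
rewrite (adj_transpE hb) (adj_transpE hi).
set a := Ordinal (ltnW hb); set b := Ordinal hb; set c := Ordinal hi.
have -> : Ordinal (ltnW hi) = b by apply: val_inj.
have Hab : a != b by rewrite -val_eqE /= neq_ltn ltnSn.
have Hbc : b != c by rewrite -val_eqE /= neq_ltn ltnSn.
have Hac : a != c by rewrite -val_eqE /= neq_ltn ltnW.
have -> : (tperm a b * tperm b c * tperm a b = tperm b c ^ tperm a b)%g.
  by rewrite /conjg tpermV mulgA.
have -> : (tperm b c * tperm a b * tperm b c = tperm a b ^ tperm b c)%g.
  by rewrite /conjg tpermV mulgA.
rewrite !tpermJ tpermR tpermL tpermD // ?(eq_sym c) //.
by rewrite tpermD // eq_sym.
Qed.

Lemma pi_cat u v : pi (u ++ v) = (pi u * pi v)%g.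
Proof. by elim: u => [|j u IH] /=; rewrite ?mul1g // IH mulgA. Qed.

Lemma pi_rev w : pi (rev w) = (pi w)^-1%g.
Proof.
elim: w => [|j w IH] /=; first by rewrite invg1.
rewrite rev_cons -cats1 pi_cat IH /= mulg1 invMg; congr (_ * _)%g.
by rewrite -[RHS]mul1g -(adj_transpK j) -mulgA mulgV mulg1.
Qed.

Lemma Lequiv_pi u v : Lq u v -> pi u = pi v.
Proof.
elim=> {u v} [//|u v _ ->|u v w _ -> _ ->|u v j hj|u v i hi] //.
- by rewrite !pi_cat /= mulg1 adj_transpK mul1g.
- rewrite !pi_cat /= !mulg1; congr (_ * _)%g; congr (_ * _)%g.
  by have := adj_transp_braid hi; rewrite -!mulgA.
Qed.

End LequivBasics.

(* Free reduction of words over signed letters (a, true) = a, (a, false) = a^-1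
   of an arbitrary alphabet L: freduce w is the reduced word of w, computed by
   pushing letters from the right; equality of reductions is equality in the
   free group on L. *)
Section FreeReduction.
Variable L : eqType.
Local Notation letter := (L * bool)%type.

Definition letter_inv (x : letter) : letter := (x.1, ~~ x.2).
Definition word_inv (w : seq letter) : seq letter := rev (map letter_inv w).

(* The predicate reduced of the statement, over an arbitrary alphabet. *)
Fixpoint freduced (f : seq letter) : bool :=
  match f with
  | x :: ((y :: _) as t) => ~~ ((x.1 == y.1) && (x.2 != y.2)) && freduced t
  | _ => true
  end.

Definition push (x : letter) (r : seq letter) : seq letter :=
  match r with
  | y :: r' => if y == letter_inv x then r' else x :: r
  | [::] => [:: x]
  end.

Definition freduce (w : seq letter) : seq letter := foldr push [::] w.

Lemma letter_invK x : letter_inv (letter_inv x) = x.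
Proof. by case: x => a s; rewrite /letter_inv /= negbK. Qed.

Lemma letter_inv_eq x y : (y == letter_inv x) = ((x.1 == y.1) && (x.2 != y.2)).
Proof.
case: x y => a s [c t]; rewrite /letter_inv /= xpair_eqE eq_sym; congr (_ && _).
by case: s; case: t.
Qed.

Lemma freduced_cons x r :
  freduced (x :: r) = freduced r && (if r is y :: _ then y != letter_inv x else true).
Proof. by case: r => [|y r] //=; rewrite letter_inv_eq andbC. Qed.

Lemma freduced_behead x r : freduced (x :: r) -> freduced r.
Proof. by rewrite freduced_cons => /andP[]. Qed.

Lemma push_freduced x r : freduced r -> freduced (push x r).
Proof.
case: r => [|y r] // Hr; rewrite /push; case: ifP => Hy.
  exact: freduced_behead Hr.
by rewrite freduced_cons Hr Hy.
Qed.

Lemma pushK x r : freduced r -> push (letter_inv x) (push x r) = r.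
Proof.
case: r => [|y r]; first by rewrite /= letter_invK eqxx.
move=> Hr; rewrite /push; case: ifP => Hy.
- case: r Hr => [|z r]; first by move/eqP: Hy => ->.
  rewrite freduced_cons => /andP [_ Hz]; move/eqP: Hy Hz => ->.
  by move/negbTE => ->.
- by rewrite letter_invK eqxx.
Qed.

Lemma foldr_push_freduced r w : freduced r -> freduced (foldr push r w).
Proof. by move=> Hr; elim: w => //= x w IH; apply: push_freduced. Qed.

Lemma freduce_freduced w : freduced (freduce w).
Proof. exact: foldr_push_freduced. Qed.

Lemma freduce_id w : freduced w -> freduce w = w.
Proof.
elim: w => //= x w IH Hw; rewrite IH ?(freduced_behead Hw) //.
case: w Hw {IH} => //= y w /andP [H _].
by rewrite letter_inv_eq (negbTE H).
Qed.

Lemma foldr_push_freduce r w : freduced r -> foldr push r w = foldr push r (freduce w).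
Proof.
move=> Hr; elim: w => //= x w ->.
case E: (freduce w) (freduce_freduced w) => [|y m] // Hm.
rewrite [push x (y :: m)]/push; case: ifP => Hy //; move/eqP: Hy => ->.
by rewrite /= -{1}(letter_invK x) pushK //; apply: foldr_push_freduced.
Qed.

Lemma freduce_cat A B : freduce (A ++ B) = foldr push (freduce B) A.
Proof. by rewrite /freduce foldr_cat. Qed.

Lemma freduceCr A B : freduce (A ++ freduce B) = freduce (A ++ B).
Proof. by rewrite !freduce_cat freduce_id // freduce_freduced. Qed.

Lemma freduceCl A B : freduce (freduce A ++ B) = freduce (A ++ B).
Proof. by rewrite !freduce_cat -foldr_push_freduce // freduce_freduced. Qed.

Lemma word_inv_cat A B : word_inv (A ++ B) = word_inv B ++ word_inv A.
Proof. by rewrite /word_inv map_cat rev_cat. Qed.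

Lemma word_invK A : word_inv (word_inv A) = A.
Proof. by rewrite /word_inv map_rev revK -map_comp (eq_map letter_invK) map_id. Qed.

Lemma word_inv_cons x A : word_inv (x :: A) = word_inv A ++ [:: letter_inv x].
Proof. by rewrite /word_inv /= rev_cons cats1. Qed.

Lemma foldr_push_cancel r W : freduced r -> foldr push r (W ++ word_inv W) = r.
Proof.
elim: W r => [|x W IH] r Hr //=.
rewrite word_inv_cons catA foldr_cat /= IH ?push_freduced //.
by rewrite -{1}(letter_invK x) pushK.
Qed.

Lemma freduce_cancel A W B : freduce (A ++ W ++ word_inv W ++ B) = freduce (A ++ B).
Proof.
rewrite freduce_cat [in RHS]freduce_cat; congr foldr.
by rewrite catA freduce_cat foldr_push_cancel // freduce_freduced.
Qed.

Lemma freduce_cancelV A W B : freduce (A ++ word_inv W ++ W ++ B) = freduce (A ++ B).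
Proof. by have := freduce_cancel A (word_inv W) B; rewrite word_invK. Qed.

Lemma freduce_congr A B C D : freduce A = freduce B -> freduce C = freduce D ->
  freduce (A ++ C) = freduce (B ++ D).
Proof. by move=> H1 H2; rewrite -freduceCl H1 freduceCl -freduceCr H2 freduceCr. Qed.

Lemma freduce_congrl A B C : freduce B = freduce C -> freduce (A ++ B) = freduce (A ++ C).
Proof. by move=> H; apply: freduce_congr. Qed.

Lemma freduce_nil_l X Y : freduce X = [::] -> freduce (X ++ Y) = freduce Y.
Proof. by move=> H; rewrite -freduceCl H. Qed.

Lemma freduce_inv A B : freduce A = freduce B -> freduce (word_inv A) = freduce (word_inv B).
Proof.
move=> H; have := freduce_cancel (word_inv A) B [::]; rewrite !cats0 => <-.
have E : freduce (B ++ word_inv B) = freduce (A ++ word_inv B) by apply: freduce_congr.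
rewrite (freduce_congrl _ E).
exact: (freduce_cancelV [::] A (word_inv B)).
Qed.

Lemma freduce_cat_nil A B : freduce (A ++ B) = [::] -> freduce B = freduce (word_inv A).
Proof.
move=> H; have := freduce_cancelV [::] A B; rewrite /= => <-.
by rewrite -freduceCr H cats0.
Qed.

End FreeReduction.

(* For k + 2 < n the letters k, k+1 generate a copy of S_3
   in L_n: every word in these two letters equals one of six normal forms
   dih_word k c (c < 6), and pi separates the normal forms. *)
Section DihedralSubgroups.
Variable n : nat.
Local Notation Lq := (Lequiv n).
Local Notation pi := (pi_word n).

Definition dih_word (k c : nat) : seq nat :=
  match c with 0 => [::] | 1 => [:: k] | 2 => [:: k.+1] | 3 => [:: k; k.+1]
  | 4 => [:: k.+1; k] | _ => [:: k; k.+1; k] end.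

Definition pair_word (k : nat) (w : seq nat) : bool :=
  all (fun j => (j == k) || (j == k.+1)) w.

Lemma pair_word_cat k u v : pair_word k (u ++ v) = pair_word k u && pair_word k v.
Proof. by rewrite /pair_word all_cat. Qed.

Lemma pair_word_rev k u : pair_word k (rev u) = pair_word k u.
Proof. by rewrite /pair_word all_rev. Qed.

Lemma pair_word_dih k c : pair_word k (dih_word k c).
Proof. by case: c => [|[|[|[|[|[|c]]]]]] //=; rewrite !eqxx ?orbT. Qed.

Lemma pair_word_letter j : pair_word j.-1 [:: j].
Proof. by case: j => [|j] //=; rewrite eqxx ?orbT. Qed.

Definition dih_image (k : nat) : {set 'S_n} := [set pi (dih_word k (val c)) | c : 'I_6].

Lemma dih_image1 k : 1%g \in dih_image k.
Proof. by apply/imsetP; exists ord0. Qed.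

Variable k : nat.
Hypothesis hk : k.+2 < n.

Lemma dih_word_step c j : c < 6 -> (j == k) || (j == k.+1) ->
  exists2 c', c' < 6 & Lq (j :: dih_word k c) (dih_word k c').
Proof.
have hk1 : k.+1 < n := ltnW hk.
move=> hc /orP[]/eqP->.
- case: c hc => [|[|[|[|[|[|c]]]]]] // _ /=.
  + by exists 1 => //; apply: Lequiv_refl.
  + by exists 0 => //; apply: Lequiv_sq_head.
  + by exists 3 => //; apply: Lequiv_refl.
  + by exists 2 => //; apply: Lequiv_sq_head.
  + by exists 5 => //; apply: Lequiv_refl.
  + by exists 4 => //; apply: Lequiv_sq_head.
- case: c hc => [|[|[|[|[|[|c]]]]]] // _ /=.
  + by exists 2 => //; apply: Lequiv_refl.
  + by exists 4 => //; apply: Lequiv_refl.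
  + by exists 0 => //; apply: Lequiv_sq_head.
  + by exists 5 => //; apply: Lequiv_sym; apply: Lequiv_braid_head.
  + by exists 1 => //; apply: Lequiv_sq_head.
  + exists 3 => //; apply: Lequiv_trans (_ : Lq [:: k.+1, k.+1, k, k.+1 & [::]] _).
      exact: (Lequiv_catl [:: k.+1] (Lequiv_braid_head [::] hk)).
    exact: Lequiv_sq_head.
Qed.

Lemma dih_word_exists w : pair_word k w -> exists2 c, c < 6 & Lq w (dih_word k c).
Proof.
elim: w => [|j w IH] /=; first by exists 0 => //; apply: Lequiv_refl.
case/andP=> hj /IH [c hc Hc].
have [c' hc' Hc'] := dih_word_step hc hj.
by exists c' => //; apply: Lequiv_trans Hc'; apply: (Lequiv_catl [:: j] Hc).
Qed.

Let p0 : 'I_n := Ordinal (ltnW (ltnW hk)).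
Let p1 : 'I_n := Ordinal (ltnW hk).
Let p2 : 'I_n := Ordinal hk.

Lemma adj_transp_low : adj_transp n k = tperm p0 p1.
Proof. by rewrite (adj_transpE (ltnW hk)); congr tperm; apply: val_inj. Qed.

Lemma adj_transp_high : adj_transp n k.+1 = tperm p1 p2.
Proof. by rewrite (adj_transpE hk); congr tperm; apply: val_inj. Qed.

(* Where the normal form of index c sends the points k and k+1. *)
Definition dih_sig (c : nat) : nat * nat :=
  match c with 0 => (k, k.+1) | 1 => (k.+1, k) | 2 => (k, k.+2) | 3 => (k.+2, k)
  | 4 => (k.+1, k.+2) | _ => (k.+2, k.+1) end.

Lemma dih_word_sig c : c < 6 ->
  (val (pi (dih_word k c) p0), val (pi (dih_word k c) p1)) = dih_sig c.
Proof.
have d01 : p0 != p1 by rewrite -val_eqE /= neq_ltn ltnSn.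
have d12 : p1 != p2 by rewrite -val_eqE /= neq_ltn ltnSn.
have d02 : p0 != p2 by rewrite -val_eqE /= neq_ltn ltnW.
have d10 : p1 != p0 by rewrite eq_sym.
have d20 : p2 != p0 by rewrite eq_sym.
case: c => [|[|[|[|[|[|c]]]]]] // _ /=;
  rewrite ?mulg1 ?adj_transp_low ?adj_transp_high ?permM ?perm1;
  do 3 rewrite ?tpermL ?tpermR ?(tpermD d10 d20) ?(tpermD d02 d12) //.
Qed.

Lemma dih_word_inj c c' : c < 6 -> c' < 6 ->
  pi (dih_word k c) = pi (dih_word k c') -> c = c'.
Proof.
move=> hc hc' E; have := dih_word_sig hc; rewrite E dih_word_sig // => {E}.
case: c hc => [|[|[|[|[|[|c]]]]]] //; case: c' hc' => [|[|[|[|[|[|c']]]]]] //= _ _;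
  move=> E; have := f_equal fst E; have := f_equal snd E; rewrite /=; lia.
Qed.

Lemma pair_word_Lequiv u u' : pair_word k u -> pair_word k u' -> pi u = pi u' -> Lq u u'.
Proof.
move=> /dih_word_exists [c hc Hc] /dih_word_exists [c' hc' Hc'] E.
have E' : pi (dih_word k c) = pi (dih_word k c').
  by rewrite -(Lequiv_pi Hc) -(Lequiv_pi Hc').
have Ec := dih_word_inj hc hc' E'; subst c'.
exact: Lequiv_trans Hc (Lequiv_sym Hc').
Qed.

Lemma pair_word_valid w : pair_word k w -> valid_word n w.
Proof.
by elim: w => //= j w IH /andP[/orP[]/eqP-> /IH->]; rewrite ?(ltnW hk) ?hk.
Qed.

Lemma dih_image_word w : pair_word k w -> pi w \in dih_image k.
Proof.
move=> /dih_word_exists [c hc Hc]; apply/imsetP; exists (Ordinal hc) => //.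
exact: Lequiv_pi Hc.
Qed.

Lemma dih_image_mul u g : pair_word k u -> g \in dih_image k -> (pi u * g)%g \in dih_image k.
Proof.
move=> hu /imsetP [c _ ->]; rewrite -pi_cat; apply: dih_image_word.
by rewrite pair_word_cat hu pair_word_dih.
Qed.

End DihedralSubgroups.

Definition dih_nf (n k : nat) (g : 'S_n) : seq nat :=
  dih_word k (odflt 0 (omap val [pick c : 'I_6 | pi_word n (dih_word k (val c)) == g])).

Lemma dih_nfP n k g : g \in dih_image n k -> pi_word n (dih_nf k g) = g.
Proof.
rewrite /dih_nf; case: pickP => [c /eqP //|H /imsetP [c _ E]].
by have := H c; rewrite E eqxx.
Qed.

Lemma pair_word_dih_nf n k (g : 'S_n) : pair_word k (dih_nf k g).
Proof. exact: pair_word_dih. Qed.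

(* A 1-cocycle from L_n to a free group.  Think of label k s as the label of
   the edge of the quotient graph joining the vertex groups D_k and D_(k+1)
   in the coset of s; it may only depend on s modulo the edge group
   generated by t_(k+1).  A permutation s then determines the path column s m from type
   0 up to type m, and reading a word letter by letter from s produces the
   label path_label s w of the corresponding path.  Inside one vertex group
   this path telescopes (path_label_pair), which makes path_label respect the
   defining relations of L_n. *)
Section EdgeCocycle.
Variable n : nat.
Variable L : eqType.
Variable label : nat -> 'S_n -> seq (L * bool).
Hypothesis label_inv : forall k (s : 'S_n), label k (s * adj_transp n k.+1)%g = label k s.

Local Notation t := (adj_transp n).
Local Notation pi := (pi_word n).

Definition column (s : 'S_n) (m : nat) : seq (L * bool) :=
  flatten [seq label i s | i <- iota 0 m].

(* The letter j lies in the vertex group of type j - 1: moving from s to s t_j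
   goes down the column of s and up the column of s t_j. *)
Definition cross (s : 'S_n) (j : nat) : seq (L * bool) :=
  column s j.-1 ++ word_inv (column (s * t j)%g j.-1).

Fixpoint path_label (s : 'S_n) (w : seq nat) : seq (L * bool) :=
  match w with [::] => [::] | j :: w' => cross s j ++ path_label (s * t j)%g w' end.

Lemma columnS s m : column s m.+1 = column s m ++ label m s.
Proof. by rewrite /column -addn1 iotaD map_cat flatten_cat /= cats0. Qed.

Lemma path_label_cat s u v :
  path_label s (u ++ v) = path_label s u ++ path_label (s * pi u)%g v.
Proof.
elim: u s => [|j u IH] s /=; first by rewrite mulg1.
by rewrite IH catA mulgA.
Qed.

Lemma cross_pair s k j : (j == k) || (j == k.+1) ->
  freduce (cross s j) = freduce (column s k ++ word_inv (column (s * t j)%g k)).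
Proof.
case/orP=> /eqP ->; last by [].
case: k => [|m] //.
rewrite /cross /= !columnS word_inv_cat -catA label_inv.
by rewrite freduce_cancel.
Qed.

Lemma path_label_pair s k u : pair_word k u ->
  freduce (path_label s u) = freduce (column s k ++ word_inv (column (s * pi u)%g k)).
Proof.
elim: u s => [|j u IH] s /=.
  by move=> _; rewrite mulg1; have := freduce_cancel [::] (column s k) [::]; rewrite cats0.
case/andP=> hj hu.
rewrite (freduce_congr (cross_pair s hj) (IH _ hu)) -!catA mulgA.
exact: freduce_cancelV.
Qed.

Lemma path_label_local s k x x' v : pair_word k x -> pair_word k x' -> pi x = pi x' ->
  freduce (path_label s (x ++ v)) = freduce (path_label s (x' ++ v)).
Proof.
move=> hx hx' E; rewrite !path_label_cat E.
by apply: freduce_congr => //; rewrite (path_label_pair _ hx) (path_label_pair _ hx') E.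
Qed.

Lemma path_label_Lequiv u v : Lequiv n u v ->
  forall s, freduce (path_label s u) = freduce (path_label s v).
Proof.
elim=> {u v} [//|u v _ IH|u v w _ IH1 _ IH2|u v j hj|u v i hi] s.
- by rewrite IH.
- by rewrite IH1 IH2.
- rewrite !(path_label_cat s u); apply: freduce_congrl.
  rewrite -[path_label _ v]/(path_label _ ([::] ++ v)).
  apply: (@path_label_local _ j.-1) => //.
    by rewrite (pair_word_cat _ [:: j]) pair_word_letter.
  exact: Lequiv_pi (Lequiv_sq_head [::] hj).
- rewrite !(path_label_cat s u); apply: freduce_congrl.
  apply: (@path_label_local _ i) => //=; rewrite ?eqxx ?orbT //.
  exact: Lequiv_pi (Lequiv_braid_head [::] hi).
Qed.

End EdgeCocycle.

(* The quotient of the Bass-Serre tree by PL_n.  A vertex of type k (with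
   k + 3 <= n) is a left coset s pi(D_k); the vertices of types k and k+1 in
   the cosets of the same s are joined by an edge.  We grow a spanning tree of
   the component of the base vertex breadth-first, record for each other
   vertex the edge to its parent (one level closer to the base), and build
   along the tree a word tree_word v whose image under pi lies in the coset v. *)
Section QuotientGraph.
Variable n : nat.
Local Notation pi := (pi_word n).

Definition qvertex := ('I_n.+1 * {set 'S_n})%type.
Definition qvert (k : nat) (s : 'S_n) : qvertex := (inord k, (s *: dih_image n k)%g).
Definition qbase : qvertex := qvert 0 1.
Definition qtype (v : qvertex) : nat := val v.1.

Lemma qtype_qvert k s : k <= n -> qtype (qvert k s) = k.
Proof. by move=> hk; rewrite /qtype /= inordK. Qed.

Lemma qvert_eq k s s' : qvert k s = qvert k s' -> (s^-1 * s')%g \in dih_image n k.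
Proof.
case=> E; have : s' \in (s' *: dih_image n k)%g by rewrite mem_lcoset mulVg dih_image1.
by rewrite -E mem_lcoset.
Qed.

Lemma qvert_pair k s u : k.+2 < n -> pair_word k u -> qvert k (s * pi u)%g = qvert k s.
Proof.
move=> hk hu; congr pair; apply/setP => x; rewrite !mem_lcoset invMg -mulgA.
apply/idP/idP => H.
- by have := dih_image_mul hk hu H; rewrite mulKVg.
- by have := dih_image_mul hk (u := rev u) _ H; rewrite pair_word_rev pi_rev; apply.
Qed.

Fixpoint ball (m : nat) : {set qvertex} :=
  if m is m'.+1 then ball m' :|: [set v | [exists k : 'I_n, exists d : 'S_n,
     (k.+4 <= n) && (((qvert k d \in ball m') && (v == qvert k.+1 d)) ||
                     ((qvert k.+1 d \in ball m') && (v == qvert k d)))]]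
  else [set qbase].

Definition reachable (v : qvertex) : Prop := exists m, v \in ball m.

Definition depth (v : qvertex) : nat :=
  match excluded_middle_informative (reachable v) with
  | left H => ex_minn H
  | right _ => 0
  end.

Lemma depth_spec v : reachable v ->
  v \in ball (depth v) /\ forall m, v \in ball m -> depth v <= m.
Proof.
rewrite /depth => H; case: excluded_middle_informative => // H'.
by case: ex_minnP.
Qed.

Lemma reachable_base : reachable qbase.
Proof. by exists 0; rewrite /= inE. Qed.

Lemma reachable_step k d : k.+4 <= n ->
  (reachable (qvert k d) ->
     reachable (qvert k.+1 d) /\ depth (qvert k.+1 d) <= (depth (qvert k d)).+1) /\
  (reachable (qvert k.+1 d) ->
     reachable (qvert k d) /\ depth (qvert k d) <= (depth (qvert k.+1 d)).+1).
Proof.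
move=> hk; have hk' : k < n by lia.
have next u v : v \in ball (depth u).+1 -> reachable v /\ depth v <= (depth u).+1.
  move=> Hv; have Rv : reachable v by exists (depth u).+1.
  by split => //; case: (depth_spec Rv) => _; apply.
split=> H; have [H1 _] := depth_spec H; apply: next => //;
  rewrite /= inE; apply/orP; right; rewrite inE;
  apply/existsP; exists (Ordinal hk'); apply/existsP; exists d;
  by rewrite /= hk H1 eqxx ?orbT.
Qed.

Definition parent_spec (v : qvertex) (p : nat * 'S_n * bool) : Prop :=
  let: (k, d, up) := p in k.+4 <= n /\
   if up then v = qvert k.+1 d /\ reachable (qvert k d) /\ depth (qvert k d) < depth v
   else v = qvert k d /\ reachable (qvert k.+1 d) /\ depth (qvert k.+1 d) < depth v.

Definition parent_edge (v : qvertex) : nat * 'S_n * bool :=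
  match excluded_middle_informative (exists p, parent_spec v p) with
  | left H => proj1_sig (constructive_indefinite_description _ H)
  | right _ => (0, 1%g, true)
  end.

(* A vertex first reached at depth m + 1 was reached from a vertex of depth m. *)
Lemma parent_edgeP v : reachable v -> v <> qbase -> parent_spec v (parent_edge v).
Proof.
move=> Hv Hv0; rewrite /parent_edge; case: excluded_middle_informative => [H|H].
  by case: constructive_indefinite_description.
exfalso; apply: H.
have [H1 H2] := depth_spec Hv.
case E: (depth v) H1 H2 => [|m] H1 H2.
  by move: H1; rewrite /= inE => /eqP.
have Hm : v \notin ball m by apply/negP => /H2; rewrite ltnn.
move: H1; rewrite /= inE (negbTE Hm) /= inE => /existsP [k /existsP [d]].
case/andP=> hk /orP [] /andP [Hd /eqP Hvd];
  [exists (val k, d, true) | exists (val k, d, false)];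
  (split => //; split => //; split; first by exists m);
  by rewrite E ltnS; case: (depth_spec (ex_intro _ m Hd)) => _; apply.
Qed.

Definition parent_type (p : nat * 'S_n * bool) : nat :=
  let: (k, _, up) := p in if up then k else k.+1.

Definition parent (v : qvertex) : qvertex :=
  qvert (parent_type (parent_edge v)) (parent_edge v).1.2.

Lemma parent_reachable v : reachable v -> v <> qbase ->
  reachable (parent v) /\ depth (parent v) < depth v.
Proof.
move=> H1 H2; have := parent_edgeP H1 H2; rewrite /parent.
by case: (parent_edge v) => [[k d] []] /= [_ [_ [H3 H4]]].
Qed.

Definition extend (r : seq nat) (s : 'S_n) (k : nat) : seq nat :=
  r ++ dih_nf k ((pi r)^-1 * s)%g.

Lemma extend_pi r s k : k.+2 < n -> qvert k (pi r) = qvert k s -> pi (extend r s k) = s.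
Proof. by move=> hk /qvert_eq E; rewrite /extend pi_cat dih_nfP ?mulKVg. Qed.

Lemma extend_valid r s k : k.+2 < n -> valid_word n r -> valid_word n (extend r s k).
Proof.
move=> hk hr; rewrite /extend valid_cat hr.
exact: (pair_word_valid hk (pair_word_dih_nf _ _)).
Qed.

Fixpoint tree_word_fuel (m : nat) (v : qvertex) : seq nat :=
  if m is m'.+1 then
    (if v == qbase then [::]
     else extend (tree_word_fuel m' (parent v)) (parent_edge v).1.2
                 (parent_type (parent_edge v)))
  else [::].

Definition tree_word (v : qvertex) : seq nat := tree_word_fuel (depth v).+1 v.

Lemma tree_word_fuel_stable m m' v : reachable v -> depth v < m -> depth v < m' ->
  tree_word_fuel m v = tree_word_fuel m' v.
Proof.
elim: m m' v => [|m IH] [|m'] v // Hv H1 H2 /=.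
case: eqP => // /eqP Hv0.
have [P1 P2] := parent_reachable Hv (elimN eqP Hv0).
by rewrite (IH m') //; lia.
Qed.

Lemma tree_word_unfold v : reachable v ->
  tree_word v = if v == qbase then [::]
                else extend (tree_word (parent v)) (parent_edge v).1.2
                            (parent_type (parent_edge v)).
Proof.
move=> Hv; rewrite /tree_word /=; case: eqP => // /eqP Hv0.
have [P1 P2] := parent_reachable Hv (elimN eqP Hv0).
by rewrite (@tree_word_fuel_stable (depth v) (depth (parent v)).+1 (parent v) P1).
Qed.

Lemma tree_word_base : tree_word qbase = [::].
Proof. by rewrite tree_word_unfold ?eqxx //; exact: reachable_base. Qed.

Hypothesis hn : 4 <= n.

Lemma tree_wordP v : reachable v ->
  [/\ (qtype v).+3 <= n, qvert (qtype v) (pi (tree_word v)) = v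
    & valid_word n (tree_word v)].
Proof.
move=> Hv; move: {2}(depth v).+1 (ltnSn (depth v)) => m.
elim: m v Hv => [|m IH] v Hv Hm //.
rewrite tree_word_unfold //; case: eqP => [->|/eqP Hv0].
  by rewrite /qbase qtype_qvert //; split => //; lia.
have HP := parent_edgeP Hv (elimN eqP Hv0).
have [P1 P2] := parent_reachable Hv (elimN eqP Hv0).
have [Q1 Q2 Q3] := IH _ P1 (leq_trans P2 (ltnSE Hm)).
move: HP Q1 Q2 Q3; rewrite /parent.
case: (parent_edge v) => [[k d] []] /= [hk [-> _]]; rewrite !qtype_qvert; try lia;
  by move=> _ Q2 Q3; split; [lia | rewrite extend_pi //; lia | apply: extend_valid => //; lia].
Qed.

End QuotientGraph.

Section Representatives.
Variable n : nat.
Local Notation Lq := (Lequiv n).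
Local Notation pi := (pi_word n).
Local Notation reachable := (@reachable n).
Local Notation qvert := (@qvert n).

Lemma reachable_up s k : reachable (qvert 0 s) -> k.+3 <= n -> reachable (qvert k s).
Proof.
move=> H; elim: k => // k IH hk.
exact: ((reachable_step s hk).1 (IH (ltnW hk))).1.
Qed.

Lemma reachable_down s k : k.+3 <= n -> reachable (qvert k s) -> reachable (qvert 0 s).
Proof.
elim: k => // k IH hk H; apply: IH; first by lia.
exact: ((reachable_step s hk).2 H).1.
Qed.

Hypothesis hn : 4 <= n.

(* Every column is reachable: the letter j moves the column of s to the
   column of s t_j through the vertex of type j - 1. *)
Lemma reachable_pi w : valid_word n w -> reachable (qvert 0 (pi w)).
Proof.
elim/last_ind: w => [_|w j IH]; first exact: reachable_base.
rewrite -cats1 valid_cat => /andP [hw]; rewrite /valid_word /= andbT => hj.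
have hm : (j.-1).+3 <= n by lia.
have := reachable_up (IH hw) hm.
rewrite -(qvert_pair (pi w) _ (pair_word_letter j)); last by lia.
by rewrite -pi_cat; apply: reachable_down.
Qed.

Lemma extend_pair r s k u : k.+2 < n -> qvert k (pi r) = qvert k s -> pair_word k u ->
  Lq (extend r (s * pi u) k) (extend r s k ++ u).
Proof.
move=> hk E hu; rewrite /extend -catA; apply: Lequiv_catl.
have Hg := qvert_eq E.
have Hg2 : ((pi r)^-1 * (s * pi u))%g \in dih_image n k.
  have /imsetP [c _ Ec] := Hg.
  rewrite mulgA Ec -pi_cat; apply: (dih_image_word hk).
  by rewrite pair_word_cat pair_word_dih hu.
apply: (pair_word_Lequiv hk); rewrite ?pair_word_cat ?pair_word_dih_nf ?hu //.
by rewrite pi_cat !dih_nfP // mulgA.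
Qed.

Lemma extend_self r s k : k.+2 < n -> pi r = s -> Lq (extend r s k) r.
Proof.
move=> hk E; rewrite /extend -[X in Lq _ X]cats0; apply: Lequiv_catl.
apply: (pair_word_Lequiv hk) => //; first exact: pair_word_dih_nf.
by rewrite dih_nfP -E ?mulVg ?dih_image1.
Qed.

Definition rep (s : 'S_n) (k : nat) : seq nat := extend (tree_word (qvert k s)) s k.

Lemma repP s k : k.+3 <= n -> reachable (qvert k s) ->
  [/\ qvert k (pi (tree_word (qvert k s))) = qvert k s, pi (rep s k) = s
    & valid_word n (rep s k)].
Proof.
move=> hk Hr; have [_ I2 I3] := tree_wordP hn Hr.
move: I2; rewrite qtype_qvert; last by lia.
by move=> I2; split => //; [apply: extend_pi | apply: extend_valid].
Qed.

Lemma rep_pair s k u : k.+3 <= n -> reachable (qvert k s) -> pair_word k u ->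
  Lq (rep (s * pi u) k) (rep s k ++ u).
Proof.
move=> hk Hr hu; have [I1 _ _] := repP hk Hr.
by rewrite /rep (qvert_pair s hk hu); apply: extend_pair.
Qed.

End Representatives.

(* An edge is a pair (type k,
   coset of <t_(k+1)>); the edges of the spanning tree get the empty label and
   the reachable non-tree edges are enumerated as cotree, the i-th getting the
   label x_i of the free group of rank nbasis.  The resulting cocycle Phi
   measures which non-tree edges a word crosses. *)
Section CotreeLabels.
Variable n : nat.
Hypothesis hn : 4 <= n.
Local Notation pi := (pi_word n).
Local Notation t := (adj_transp n).
Local Notation reachable := (@reachable n).
Local Notation qvert := (@qvert n).
Local Notation qbase := (qbase n).

Definition qedge_type := ('I_n.+1 * {set 'S_n})%type.
Definition qedge (k : nat) (s : 'S_n) : qedge_type := (inord k, [set s; (s * t k.+1)%g]).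

Definition tree_edge (e : qedge_type) : Prop :=
  exists v, reachable v /\ v <> qbase /\ e = qedge (parent_edge v).1.1 (parent_edge v).1.2.

Definition cotree_edge (e : qedge_type) : Prop :=
  exists k d, k.+4 <= n /\ e = qedge k d /\ reachable (qvert k d) /\ ~ tree_edge e.

Definition classic_bool (P : Prop) : bool :=
  if excluded_middle_informative P then true else false.

Lemma classic_boolP (P : Prop) : reflect P (classic_bool P).
Proof. by rewrite /classic_bool; case: excluded_middle_informative => H; constructor. Qed.

Definition cotree : seq qedge_type := [seq e <- enum {: qedge_type} | classic_bool (cotree_edge e)].
Definition nbasis : nat := size cotree.

Definition edge_label (e : qedge_type) : seq ('I_nbasis * bool) :=
  if insub (index e cotree) is Some i then [:: (i, true)] else [::].

Definition label (k : nat) (s : 'S_n) : seq ('I_nbasis * bool) := edge_label (qedge k s).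

Lemma label_inv k (s : 'S_n) : label k (s * t k.+1)%g = label k s.
Proof.
rewrite /label /qedge -mulgA adj_transpK mulg1; congr (edge_label (_, _)).
by rewrite setUC.
Qed.

Lemma cotree_uniq : uniq cotree.
Proof. by rewrite filter_uniq // enum_uniq. Qed.

Lemma edge_label_nth (i : 'I_nbasis) e0 : edge_label (nth e0 cotree i) = [:: (i, true)].
Proof.
rewrite /edge_label index_uniq ?cotree_uniq //.
by rewrite (insubT (fun m => m < nbasis) (ltn_ord i)); congr [:: (_, _)]; apply: val_inj.
Qed.

Lemma edge_label_tree e : tree_edge e -> edge_label e = [::].
Proof.
move=> He; rewrite /edge_label; case: insubP => // i; rewrite -/nbasis index_mem.
by rewrite mem_filter => /andP [/classic_boolP [k [d [_ [_ [_ []]]]]]].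
Qed.

Local Notation Phi s w := (freduce (path_label label s w)).

Lemma path_label_extend r s k : k.+2 < n -> qvert k (pi r) = qvert k s ->
  Phi 1%g (extend r s k) =
  freduce (path_label label 1 r ++ column label (pi r) k ++ word_inv (column label s k)).
Proof.
move=> hk E; rewrite /extend path_label_cat mul1g; apply: freduce_congrl.
rewrite (path_label_pair label_inv _ (pair_word_dih_nf _ _)) -pi_cat.
by rewrite (extend_pi hk E).
Qed.

Lemma column_tree_edge d k : tree_edge (qedge k d) ->
  column label d k.+1 = column label d k.
Proof. by move=> Ht; rewrite columnS /label (edge_label_tree Ht) cats0. Qed.

(* Following the spanning tree from the base vertex to v, then descending
   the column of v, crosses only tree edges. *)
Lemma tree_word_label v : reachable v ->
  freduce (path_label label 1 (tree_word v) ++ column label (pi (tree_word v)) (qtype v)) = [::].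
Proof.
move=> Hv; move: {2}(depth v).+1 (ltnSn (depth v)) => m.
elim: m v Hv => [|m IH] v Hv Hm //.
have [I1 _ _] := tree_wordP hn Hv.
move: I1; rewrite tree_word_unfold //; case: eqP => [-> _|/eqP Hv0].
  by rewrite /qbase qtype_qvert.
have [P1 P2] := parent_reachable Hv (elimN eqP Hv0).
have IHp := IH _ P1 (leq_trans P2 (ltnSE Hm)).
have [_ J2 _] := tree_wordP hn P1.
have Htr : tree_edge (qedge (parent_edge v).1.1 (parent_edge v).1.2).
  by exists v; split => //; split => //; apply/eqP.
move: (parent_edgeP Hv (elimN eqP Hv0)) IHp J2 Htr; rewrite /parent.
case: (parent_edge v) => [[k d] []] /= [hk [-> _]];
  rewrite !qtype_qvert; try lia; move=> IHp J2 /column_tree_edge Ecol;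
  rewrite (extend_pi _ J2); try lia;
  rewrite -freduceCl (path_label_extend _ J2); try lia;
  rewrite freduceCl catA -catA (freduce_nil_l _ IHp) Ecol => _;
  by have := freduce_cancelV [::] (column label d k) [::]; rewrite !cats0.
Qed.

Lemma rep_label s k : k.+3 <= n -> reachable (qvert k s) ->
  Phi 1%g (rep s k) = freduce (word_inv (column label s k)).
Proof.
move=> hk Hr; have [I1 _ _] := repP hn hk Hr.
have := tree_word_label Hr; rewrite qtype_qvert; last by lia.
move=> HT; rewrite /rep (path_label_extend _ I1) // catA.
exact: freduce_nil_l HT.
Qed.

Lemma path_label_rev w : valid_word n w ->
  Phi (pi w) (rev w) = freduce (word_inv (path_label label 1 w)).
Proof.
move=> hw; have := path_label_Lequiv label_inv (Lequiv_cat_rev hw) 1.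
by rewrite path_label_cat mul1g; apply: freduce_cat_nil.
Qed.

(* The loop of the edge (k, s): up the tree to the vertex of type k of s,
   across the edge, and back down the tree from the vertex of type k + 1. *)
Definition loop_word (s : 'S_n) (k : nat) : seq nat := rep s k ++ rev (rep s k.+1).

Lemma loop_label s k : k.+4 <= n -> reachable (qvert k s) ->
  Phi 1%g (loop_word s k) = freduce (label k s).
Proof.
move=> hk Hr; have [Hr' _] := (reachable_step s hk).1 Hr.
have hk3 : k.+3 <= n by lia.
have [_ P1 V1] := repP hn hk3 Hr.
have [_ P2 V2] := repP hn hk Hr'.
have E := path_label_rev V2; rewrite P2 in E.
rewrite /loop_word path_label_cat mul1g P1 -freduceCr E freduceCr.
rewrite -freduceCl rep_label // freduceCl -freduceCr.
rewrite (freduce_inv (rep_label hk Hr')) word_invK freduceCr columnS.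
exact: (freduce_cancelV [::]).
Qed.

End CotreeLabels.

Lemma qedge_eq n k k' (s d : 'S_n) : k.+4 <= n -> k'.+4 <= n -> qedge k s = qedge k' d ->
  k = k' /\ (s = d \/ s = (d * adj_transp n k.+1)%g).
Proof.
move=> hk hk' [E1 E2].
have Ek : k = k' by rewrite -(@inordK n k) -1?(@inordK n k') ?E1 //; lia.
subst k'; split => //.
have : s \in [set s; (s * adj_transp n k.+1)%g] by rewrite !inE eqxx.
by rewrite E2 !inE => /orP [] /eqP ->; [left|right].
Qed.

(* The basis: one loop word for each reachable non-tree edge.  Its label
   under Phi is the corresponding generator x_i, so Phi maps the subgroup
   they generate isomorphically onto the free group: they form a free family. *)
Section FreeBasis.
Variable n : nat.
Hypothesis hn : 4 <= n.
Local Notation Lq := (Lequiv n).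
Local Notation pi := (pi_word n).
Local Notation reachable := (@reachable n).
Local Notation qvert := (@qvert n).
Local Notation label := (@label n).
Local Notation Phi s w := (freduce (path_label label s w)).

Definition cotree_end_spec (i : 'I_(nbasis n)) (p : nat * 'S_n) : Prop :=
  [/\ p.1.+4 <= n, nth (ord0, set0) (cotree n) i = qedge p.1 p.2 & reachable (qvert p.1 p.2)].

Definition cotree_end (i : 'I_(nbasis n)) : nat * 'S_n :=
  match excluded_middle_informative (exists p, cotree_end_spec i p) with
  | left H => proj1_sig (constructive_indefinite_description _ H)
  | right _ => (0, 1%g)
  end.

Lemma cotree_endP i : cotree_end_spec i (cotree_end i).
Proof.
rewrite /cotree_end; case: excluded_middle_informative => [H|H].
  by case: constructive_indefinite_description.
exfalso; apply: H.
have := mem_nth (ord0, set0) (ltn_ord i).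
rewrite mem_filter => /andP [/classic_boolP [k [d [H1 [H2 [H3 _]]]]] _].
by exists (k, d).
Qed.

Definition basis (i : 'I_(nbasis n)) : seq nat := loop_word (cotree_end i).2 (cotree_end i).1.

Lemma Phi_basis i : Phi 1%g (basis i) = [:: (i, true)].
Proof.
have [H1 H2 H3] := cotree_endP i.
by rewrite /basis loop_label // /label -H2 edge_label_nth.
Qed.

Lemma basis_PL i : in_PL n (basis i).
Proof.
have [H1 _ H3] := cotree_endP i.
have [Hr' _] := (reachable_step (cotree_end i).2 H1).1 H3.
have [_ P1 V1] := repP hn (ltnW H1) H3.
have [_ P2 V2] := repP hn H1 Hr'.
split; first by rewrite /basis /loop_word valid_cat valid_rev V1 V2.
by rewrite /basis /loop_word pi_cat pi_rev P1 P2 mulgV.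
Qed.

Lemma reducedE k (f : seq ('I_k * bool)) : reduced f = freduced f.
Proof. by elim: f => //= x f IH; case: f IH => //= y f ->. Qed.

Lemma Phi_eval f : Phi 1%g (eval_free basis f) = freduce f.
Proof.
elim: f => [|[i s] f IH] //.
have -> : eval_free basis ((i, s) :: f) =
          (if s then basis i else rev (basis i)) ++ eval_free basis f by [].
have [Hv Hp] := basis_PL i.
have Hpc : pi (if s then basis i else rev (basis i)) = 1%g.
  by case: s; rewrite ?pi_rev Hp ?invg1.
rewrite path_label_cat Hpc mulg1 -cat1s.
apply: freduce_congr => //.
case: s {Hpc}; first by rewrite Phi_basis.
have := path_label_rev Hv; rewrite Hp => ->.
by rewrite (@freduce_inv _ _ [:: (i, true)]) // Phi_basis.
Qed.

Lemma basis_free f : reduced f -> Lq (eval_free basis f) [::] -> f = [::].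
Proof.
move=> Hf H; have := path_label_Lequiv (@label_inv n) H 1; rewrite Phi_eval => E.
by rewrite -(freduce_id (w:=f)) ?E // -reducedE.
Qed.

End FreeBasis.

(* Every loop word is generated: a tree loop is
   trivial and a non-tree loop is a basis element, up to moving its base
   point inside the edge group.  Telescoping loop words shows that any
   crossing of a letter j, seen from the representatives at type 0, is
   generated; an induction along w then writes w rep(pi w)^-1 in the basis. *)
Section Generation.
Variable n : nat.
Hypothesis hn : 4 <= n.
Local Notation Lq := (Lequiv n).
Local Notation pi := (pi_word n).
Local Notation t := (adj_transp n).
Local Notation reachable := (@reachable n).
Local Notation qvert := (@qvert n).
Local Notation rep := (@rep n).
Local Notation basis := (@basis n).

Definition generated (w : seq nat) : Prop := exists f, Lq w (eval_free basis f).

Lemma eval_cat f g : eval_free basis (f ++ g) = eval_free basis f ++ eval_free basis g.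
Proof. by rewrite /eval_free map_cat flatten_cat. Qed.

Lemma eval_rev f :
  eval_free basis (rev (map (letter_inv (L:=_)) f)) = rev (eval_free basis f).
Proof.
elim: f => [|[i s] f IH] //.
rewrite /= rev_cons -cats1 eval_cat IH.
have -> : eval_free basis ((i, s) :: f) =
          (if s then basis i else rev (basis i)) ++ eval_free basis f by [].
by rewrite rev_cat; congr (_ ++ _); rewrite /eval_free /= cats0; case: s; rewrite ?revK.
Qed.

Lemma gen_Lequiv u v : Lq u v -> generated v -> generated u.
Proof. by move=> H [f Hf]; exists f; apply: Lequiv_trans H Hf. Qed.

Lemma gen_nil u : Lq u [::] -> generated u.
Proof. by move=> H; apply: gen_Lequiv H _; exists [::]; apply: Lequiv_refl. Qed.

Lemma gen_cat u v : generated u -> generated v -> generated (u ++ v).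
Proof. by move=> [f Hf] [g Hg]; exists (f ++ g); rewrite eval_cat; apply: Lequiv_cat. Qed.

Lemma gen_rev u : generated u -> generated (rev u).
Proof.
move=> [f Hf]; exists (rev (map (letter_inv (L:=_)) f)).
by rewrite eval_rev; apply: Lequiv_rev.
Qed.

Lemma loop_word_shift s k : k.+4 <= n -> reachable (qvert k s) ->
  Lq (loop_word (s * t k.+1)%g k) (loop_word s k).
Proof.
move=> hk Hr; have [Hr' _] := (reachable_step s hk).1 Hr.
have A2 : pair_word k.+1 [:: k.+1] by rewrite /pair_word /= eqxx.
have H1 := rep_pair hn (ltnW hk) Hr (pair_word_letter k.+1).
have H2 := rep_pair hn hk Hr' A2.
rewrite /= mulg1 in H1 H2.
rewrite /loop_word; apply: Lequiv_trans (Lequiv_cat H1 (Lequiv_rev H2)) _.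
rewrite rev_cat /= -catA; apply: Lequiv_catl.
exact: (Lequiv_sq_head _ (ltnW hk)).
Qed.

Lemma rep_parent v : reachable v -> v <> qbase n ->
  Lq (rep (parent_edge v).1.2 (parent_edge v).1.1) (rep (parent_edge v).1.2 (parent_edge v).1.1.+1).
Proof.
move=> Hv Hv0; have HP := parent_edgeP Hv Hv0.
move: (tree_word_unfold Hv); move/eqP: Hv0 => /negbTE ->; rewrite /parent.
case: (parent_edge v) HP => [[k d] []] /= [hk [Ev [Hr _]]] Etw;
  rewrite /rep -Ev Etw -/(rep _ _).
- have [_ Hpi _] := repP hn (ltnW hk) Hr.
  by apply: Lequiv_sym; apply: extend_self => //; lia.
- have [_ Hpi _] := repP hn hk Hr.
  by apply: extend_self => //; lia.
Qed.

Lemma loop_word_tree s k : k.+4 <= n -> reachable (qvert k s) -> tree_edge (qedge k s) ->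
  Lq (loop_word s k) [::].
Proof.
move=> hk Hr [v [Hv [Hv0 Ee]]].
move: Ee (rep_parent Hv Hv0) (parent_edgeP Hv Hv0).
case: (parent_edge v) => [[k' d] up] /= Ee Hrep [hk' _].
have [Ek Es] := qedge_eq hk hk' Ee; subst k'.
have Hrd : reachable (qvert k d).
  have E := qvert_pair d (ltnW hk) (pair_word_letter k.+1); rewrite /= mulg1 in E.
  by case: Es Hr => ->; rewrite ?E.
have Hloop : Lq (loop_word d k) [::].
  have [_ _ V] := repP hn (ltnW hk) Hrd.
  apply: Lequiv_trans (Lequiv_catl _ (Lequiv_rev (Lequiv_sym Hrep))) _.
  exact: Lequiv_cat_rev V.
case: Es => ->; first exact: Hloop.
exact: Lequiv_trans (loop_word_shift hk Hrd) Hloop.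
Qed.

Lemma gen_loop_word s k : k.+4 <= n -> reachable (qvert k s) -> generated (loop_word s k).
Proof.
move=> hk Hr.
case: (excluded_middle_informative (tree_edge (qedge k s))) => Ht.
  exact: gen_nil (loop_word_tree hk Hr Ht).
have Hin : qedge k s \in cotree n.
  rewrite mem_filter mem_enum andbT; apply/classic_boolP.
  by exists k, s; split => //; split.
pose i : 'I_(nbasis n) := Ordinal (etrans (index_mem _ _) Hin).
have [K1 K2 K3] := cotree_endP i.
have [Ek Es] := qedge_eq hk K1 (etrans (esym (nth_index _ Hin)) K2).
exists [:: (i, true)]; rewrite /eval_free /= cats0 /basis -Ek.
case: Es => ->; first exact: Lequiv_refl.
by apply: loop_word_shift => //; rewrite Ek.
Qed.

Lemma gen_column s k : reachable (qvert 0 s) -> k.+3 <= n ->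
  generated (rep s 0 ++ rev (rep s k)).
Proof.
move=> Hr; elim: k => [|k IH] hk.
  have [_ _ V] := repP hn hk Hr.
  exact: gen_nil (Lequiv_cat_rev V).
have [_ _ V] := repP hn (ltnW hk) (reachable_up Hr (ltnW hk)).
apply: gen_Lequiv (gen_cat (IH (ltnW hk)) (gen_loop_word hk (reachable_up Hr (ltnW hk)))).
rewrite /loop_word; move: (rep s 0) (rep s k) (rep s k.+1) V => A B C V.
rewrite -!catA; apply: Lequiv_catl; rewrite catA -[X in Lq X _]cat0s; apply: Lequiv_catr.
by apply: Lequiv_sym; apply: Lequiv_rev_cat.
Qed.

(* Crossing the letter j, seen from the representatives at type 0, is
   generated: go up to type j - 1, where j acts inside the vertex group. *)
Lemma gen_cross s j : reachable (qvert 0 s) -> j.+1 < n ->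
  generated (rep s 0 ++ [:: j] ++ rev (rep (s * t j)%g 0)).
Proof.
move=> Hr hj.
have hm : (j.-1).+3 <= n by lia.
have Hrm := reachable_up Hr hm.
have Hsh := rep_pair hn hm Hrm (pair_word_letter j); rewrite /= mulg1 in Hsh.
have Hr' : reachable (qvert 0 (s * t j)%g).
  have E := qvert_pair s hm (pair_word_letter j); rewrite /= mulg1 in E.
  by apply: (reachable_down hm); rewrite E.
have G := gen_rev (gen_column Hr' hm); rewrite rev_cat revK in G.
apply: gen_Lequiv (gen_cat (gen_column Hr hm) G).
have [_ _ V] := repP hn hm Hrm.
move: Hsh V; move: (rep s 0) (rep s j.-1) (rep (s * t j)%g j.-1) (rep (s * t j)%g 0).
move=> A B C D Hsh V; rewrite -!catA; apply: Lequiv_catl.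
apply: Lequiv_trans (_ : Lq _ ((rev B ++ B) ++ [:: j] ++ rev D)) _.
  rewrite -[X in Lq X _]cat0s; apply: Lequiv_catr.
  by apply: Lequiv_sym; apply: Lequiv_rev_cat.
rewrite -!catA; apply: Lequiv_catl; rewrite catA; apply: Lequiv_catr.
exact: Lequiv_sym Hsh.
Qed.

Lemma rep_base : Lq (rep 1%g 0) [::].
Proof. by rewrite /rep tree_word_base; apply: extend_self => //; lia. Qed.

Lemma gen_rep w : valid_word n w -> generated (w ++ rev (rep (pi w) 0)).
Proof.
elim/last_ind: w => [_|w j IH].
  by apply: gen_nil; rewrite -[X in Lq _ X](revK [::]); apply: Lequiv_rev; apply: rep_base.
rewrite -cats1 valid_cat => /andP [hw]; rewrite /valid_word /= andbT => hj.
have h3 : 0.+3 <= n by lia.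
have [_ _ V] := repP hn h3 (reachable_pi hn hw).
apply: gen_Lequiv (gen_cat (IH hw) (gen_cross (reachable_pi hn hw) hj)).
rewrite pi_cat /= mulg1; move: V; move: (rep (pi w) 0) (rep (pi w * t j)%g 0) => A D V.
rewrite -!catA; apply: Lequiv_catl; rewrite catA -[X in Lq X _]cat0s; apply: Lequiv_catr.
exact: Lequiv_sym (Lequiv_rev_cat V).
Qed.

Lemma basis_gen w : in_PL n w -> generated w.
Proof.
move=> [hw hp]; apply: gen_Lequiv (gen_rep hw).
rewrite hp -[X in Lq X _]cats0; apply: Lequiv_catl.
by apply: Lequiv_sym; rewrite -[X in Lq _ X](revK [::]); apply: Lequiv_rev; apply: rep_base.
Qed.

End Generation.

Theorem PL_free_ge4 n : 4 <= n -> PL_free_finite_rank n.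
Proof.
move=> hn; exists (nbasis n), (@basis n); split; first exact: basis_PL.
by split; [exact: basis_gen | exact: basis_free].
Qed.

(* A test action of L_n on nat, valid for every n: y_1 swaps 2 and 3, y_j
   swaps 1 and 2 for j even and 0 and 2 for j odd > 1.  The images of
   y_1 y_3 y_1 y_3 and its conjugate by y_2 are pure but do not commute. *)
Definition swap (a b y : nat) : nat := if y == a then b else if y == b then a else y.

Definition test_gen (j y : nat) : nat :=
  if j == 0 then swap 2 3 y else if odd j then swap 1 2 y else swap 0 2 y.

Definition test_act (w : seq nat) (x : nat) : nat := foldr test_gen x w.

Lemma test_act_cat u v x : test_act (u ++ v) x = test_act u (test_act v x).
Proof. by rewrite /test_act foldr_cat. Qed.

Lemma test_gen_inv j y : test_gen j (test_gen j y) = y.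
Proof.
by rewrite /test_gen; case: (j == 0); last case: (odd j); case: y => [|[|[|[|y]]]].
Qed.

Lemma test_gen_braid i y :
  test_gen i (test_gen i.+1 (test_gen i y)) = test_gen i.+1 (test_gen i (test_gen i.+1 y)).
Proof.
rewrite /test_gen /=; case: i => [|i] /=; first by case: y => [|[|[|[|y]]]].
by case: (odd i) => /=; case: y => [|[|[|[|y]]]].
Qed.

Lemma test_act_Lequiv n u v : Lequiv n u v -> forall x, test_act u x = test_act v x.
Proof.
elim=> {u v} [//|u v _ IH|u v w _ IH1 _ IH2|u v j hj|u v i hi] x.
- by rewrite IH.
- by rewrite IH1 IH2.
- by rewrite !test_act_cat /= test_gen_inv.
- by rewrite !test_act_cat /= test_gen_braid.
Qed.

Lemma tperm_comm n (a b c d : 'I_n) : a != c -> a != d -> b != c -> b != d ->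
  (tperm a b * tperm c d = tperm c d * tperm a b)%g.
Proof.
move=> h1 h2 h3 h4.
have E : (tperm c d ^ tperm a b = tperm c d)%g by rewrite tpermJ !tpermD // eq_sym.
rewrite /conjg tpermV in E.
by rewrite -{2}E mulgA -(mulgA _ (tperm a b)) tperm2 mulg1.
Qed.

Lemma PL_nonabelian_ge4 n : 4 <= n -> PL_nonabelian n.
Proof.
move=> hn.
have h0 : 0.+1 < n by lia.
have h1 : 1.+1 < n by lia.
have h2 : 2.+1 < n by lia.
have Hc : (adj_transp n 0 * adj_transp n 2 = adj_transp n 2 * adj_transp n 0)%g.
  by rewrite (adj_transpE h0) (adj_transpE h2); apply: tperm_comm; rewrite -val_eqE.
have Hu : pi_word n [:: 0; 2; 0; 2] = 1%g.
  rewrite /= mulg1 !mulgA Hc -(mulgA (adj_transp n 2)) adj_transpK mulg1.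
  exact: adj_transpK.
have Hv : pi_word n [:: 1; 0; 2; 0; 2; 1] = 1%g.
  rewrite -[[:: 1; 0; 2; 0; 2; 1]]/([:: 1] ++ [:: 0; 2; 0; 2] ++ [:: 1]).
  by rewrite !pi_cat Hu mul1g /= !mulg1 adj_transpK.
exists [:: 0; 2; 0; 2], [:: 1; 0; 2; 0; 2; 1]; split.
  by split => //; rewrite /valid_word /= h0 h2.
split; first by split => //; rewrite /valid_word /= h0 h1 h2.
by move/test_act_Lequiv => /(_ 0).
Qed.

(* For n = 2, L_2 = Z/2 embeds in S_2; for n = 3, L_3 = D_0 embeds in S_3. *)
Lemma PL_trivial_le3 n : 2 <= n -> n <= 3 -> PL_trivial n.
Proof.
move=> h2 h3 w [hw hp].
have [E2|E3] : n = 2 \/ n = 3 by lia.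
- subst n; suff : Lequiv 2 w [::] \/ Lequiv 2 w [:: 0].
    case=> // H; exfalso.
    have := Lequiv_pi H; rewrite hp /= mulg1 (@adj_transpE 2 0 (ltnSn 1)).
    by move=> /esym/permP/(_ (Ordinal (ltnW (ltnSn 1)))); rewrite tpermL perm1.
  elim: w hw {hp} => [|j w IH]; first by left; apply: Lequiv_refl.
  rewrite /valid_word /= => /andP [hj /IH []] H; have -> : j = 0 by lia.
  + by right; apply: (Lequiv_catl [:: 0] H).
  + left; apply: Lequiv_trans (Lequiv_catl [:: 0] H) _.
    exact: (Lequiv_sq_head _ (ltnSn 1)).
- subst n; apply: (@pair_word_Lequiv 3 0) => //.
  elim: w hw {hp} => // j w IH; rewrite /valid_word /= => /andP [hj hw].
  by rewrite IH // andbT; case: j hj => [|[|j]].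
Qed.

Lemma PL_trivial_abelian n : PL_trivial n -> ~ PL_nonabelian n.
Proof.
move=> T [u [v [Hu [Hv Hne]]]]; apply: Hne.
apply: Lequiv_trans (Lequiv_cat (T u Hu) (T v Hv)) _.
exact: Lequiv_sym (Lequiv_cat (T v Hv) (T u Hu)).
Qed.

Theorem proposition5p3 (n : nat) (hn : 2 <= n) :
  ((PL_free_finite_rank n /\ PL_nonabelian n) <-> 4 <= n) /\
  (n <= 3 -> PL_trivial n).
Proof.
split; last exact: PL_trivial_le3.
split=> [[_ Hnab]|h4]; last by split; [exact: PL_free_ge4 | exact: PL_nonabelian_ge4].
case: (leqP 4 n) => // h3; exfalso.
exact: PL_trivial_abelian (PL_trivial_le3 hn h3) Hnab.
Qed.
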